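(* Let $F$ be a field of characteristic $0$, $d,n\ge1$, and let $G(x_1,\dots,x_{d^2})\in F\langle X\rangle^{\otimes n}$ be a tensor polynomial in the $d^2$ variables $x_1,\dots,x_{d^2}$ which is multilinear and alternating as a function on $M_d(F)^{d^2}$ with values in $M_d(F)^{\otimes n}$. Then there is an element $J_G\in M_d(F)^{\otimes n}$, invariant under the diagonal conjugation action of $GL(d)$ and lying in the linear span $\Sigma_n(F^d)$ of the permutation operators of the tensor factors in $M_d(F)^{\otimes n}=\mathrm{End}((F^d)^{\otimes n})$, such that for all $x_1,\dots,x_{d^2}\in M_d(F)$ $$G(x_1,\dots,x_{d^2})=\det(x_1,\dots,x_{d^2})\,J_G.$$
   Context: $F\langle X\rangle$ is the free associative algebra in $x_1,x_2,\dots$; an element of $F\langle X\rangle^{\otimes n}$ is evaluated on matrices via the algebra homomorphism $F\langle X\rangle^{\otimes n}\to M_d(F)^{\otimes n}$ induced by $x_i\mapsto x_i\in M_d(F)$. For $x_1,\dots,x_{d^2}\in M_d(F)$, $\det(x_1,\dots,x_{d^2})$ is the determinant of the $d^2\times d^2$ matrix whose $i$-th column is the coordinate vector of $x_i$ in the basis of elementary matrices $e_{i,j}$ ordered lexicographically. $S_n$ acts on $(F^d)^{\otimes n}$ by permuting tensor factors, and $GL(d)$ acts diagonally, $g(y_1\otimes\cdots\otimes y_n)=gy_1\otimes\cdots\otimes gy_n$. *)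

From HB Require Import structures.
From mathcomp Require Import all_boot all_order all_fingroup all_algebra.
Set Implicit Arguments. Unset Strict Implicit. Unset Printing Implicit Defensive.
Import GRing.Theory.
Local Open Scope ring_scope.

(* Multi-indices of the basis of (F^d)^{\otimes n}: i = (i_1,...,i_n). *)
Notation tidx d n := ({ffun 'I_n -> 'I_d}).

(* M_d(F)^{\otimes n} = End((F^d)^{\otimes n}): square matrices whose rows and
   columns are indexed (via enum_val) by the multi-indices tidx d n. *)
Notation tdim d n := #|{: tidx d n}|.
Notation tens F d n := ('M[F]_(tdim d n)).

Definition kron (F : fieldType) (d n : nat) (A : 'I_n -> 'M[F]_d) : tens F d n :=
  \matrix_(i, j) \prod_(k < n) A k ((enum_val i : tidx d n) k) ((enum_val j : tidx d n) k).

(* Permutation operator: y_1 (x) ... (x) y_n |-> y_{s^-1 1} (x) ... (x) y_{s^-1 n}. *)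
Definition perm_op (F : fieldType) (d n : nat) (s : 'S_n) : tens F d n :=
  \matrix_(i, j) if (enum_val i : tidx d n) == [ffun k => (enum_val j : tidx d n) ((s^-1)%g k)]
                 then 1 else 0.

(* Element of F<X>^{\otimes n} in the variables x_1..x_m (given as indices
   'I_m): a finite linear combination of tensors w_1 (x) ... (x) w_n of words. *)
Definition tpoly (F : fieldType) (m n : nat) := seq (F * {ffun 'I_n -> seq 'I_m}).

Definition eval_word (F : fieldType) (d m : nat) (x : 'I_m -> 'M[F]_d) (w : seq 'I_m)
  : 'M[F]_d := foldr (fun v M => x v *m M) 1%:M w.

Definition eval_tpoly (F : fieldType) (d m n : nat) (G : tpoly F m n)
  (x : 'I_m -> 'M[F]_d) : tens F d n :=
  \sum_(t <- G) t.1 *: kron (fun k => eval_word x (t.2 k)).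

Definition upd (T : Type) (m : nat) (x : 'I_m -> T) (i : 'I_m) (y : T) : 'I_m -> T :=
  fun j => if j == i then y else x j.

Definition multilinear_fun (F : fieldType) (d m : nat) (V : lmodType F)
  (f : ('I_m -> 'M[F]_d) -> V) : Prop :=
  forall (x : 'I_m -> 'M[F]_d) (i : 'I_m) (a : F) (y z : 'M[F]_d),
    f (upd x i (a *: y + z)) = a *: f (upd x i y) + f (upd x i z).

Definition alternating_fun (F : fieldType) (d m : nat) (V : lmodType F)
  (f : ('I_m -> 'M[F]_d) -> V) : Prop :=
  forall (x : 'I_m -> 'M[F]_d) (i j : 'I_m), i != j -> x i = x j -> f x = 0.

(* det(x_1,...,x_{d^2}): columns are coordinate vectors of x_c in the basis
   e_{a,b} ordered lexicographically (mxvec uses lexicographic order on (a,b)). *)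
Definition detx (F : fieldType) (d : nat) (x : 'I_(d * d) -> 'M[F]_d) : F :=
  \det (\matrix_(r < d * d, c < d * d) mxvec (x c) 0 r).

Definition GL_invariant (F : fieldType) (d n : nat) (J : tens F d n) : Prop :=
  forall g : 'M[F]_d, g \in unitmx ->
    kron (fun _ => g) *m J *m kron (fun _ => invmx g) = J.

Definition in_perm_span (F : fieldType) (d n : nat) (J : tens F d n) : Prop :=
  exists c : 'S_n -> F, J = \sum_(s : 'S_n) c s *: perm_op F d s.

From HB Require Import structures.
From mathcomp Require Import all_boot all_order all_fingroup all_algebra.
From mathcomp Require Import mxrepresentation.
From Stdlib Require Import FunctionalExtensionality.
Set Implicit Arguments. Unset Strict Implicit. Unset Printing Implicit Defensive.
Import GRing.Theory.
Local Open Scope ring_scope.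

(* An alternating multilinear function of d^2 arguments in the d^2-dimensional
   space M_d(F) is detx times its value J at the basis of elementary matrices.
   Conjugating all arguments by g conjugates G by g^{(x)n}, and conjugation by g
   has determinant 1 on M_d(F); hence J commutes with every g^{(x)n}, g
   invertible, and, in characteristic 0, with every A^{(x)n} by a polynomial
   argument in A + t. By polarization these span the S_n-averages
   sum_s P_s X P_s^-1, and an operator commuting with all such averages lies in
   the span of the P_s: averaging a projection onto that span over S_n gives a
   map T with T J = J T 1 = n! J. *)

Local Notation kpow A := (kron (fun _ => A)).

Lemma comp_upd (T U : Type) m (h : T -> U) (x : 'I_m -> T) i y :
  h \o upd x i y = upd (h \o x) i (h y).
Proof. by apply: functional_extensionality => j; rewrite /upd /=; case: eqP. Qed.

Section MultilinearForms.

Variables (R : pzRingType) (M V : lmodType R) (m : nat).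
Implicit Types (f : ('I_m -> M) -> V) (x : 'I_m -> M).

Definition multilinear f := forall x i (a : R) (y z : M),
  f (upd x i (a *: y + z)) = a *: f (upd x i y) + f (upd x i z).

Definition alternating f := forall x (i j : 'I_m), i != j -> x i = x j -> f x = 0.

Lemma upd_id x i : upd x i (x i) = x.
Proof. by apply: functional_extensionality => j; rewrite /upd; case: eqP => [->|]. Qed.

Lemma multilinearD f : multilinear f ->
  forall x i y z, f (upd x i (y + z)) = f (upd x i y) + f (upd x i z).
Proof. by move=> fL x i y z; rewrite -[y in LHS]scale1r fL scale1r. Qed.

Lemma multilinear0 f : multilinear f -> forall x i, f (upd x i 0) = 0.
Proof.
move=> fL x i; have := multilinearD fL x i 0 0; rewrite addr0 => fD.
by apply: (addrI (f (upd x i 0))); rewrite addr0 -fD.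
Qed.

Lemma multilinear_sum f (I : Type) (r : seq I) (a : I -> R) (v : I -> M) :
  multilinear f -> forall x i,
  f (upd x i (\sum_(j <- r) a j *: v j)) = \sum_(j <- r) a j *: f (upd x i (v j)).
Proof.
move=> fL x i; elim: r => [|j r IHr]; first by rewrite !big_nil multilinear0.
by rewrite !big_cons fL IHr.
Qed.

Lemma updC x (i j : 'I_m) y z : i != j -> upd (upd x i y) j z = upd (upd x j z) i y.
Proof.
move=> nij; apply: functional_extensionality => k; rewrite /upd.
by case: (k =P j) => [->|//]; rewrite eq_sym (negbTE nij).
Qed.

Lemma alternating_tperm f : multilinear f -> alternating f ->
  forall x (i j : 'I_m), i != j -> f (x \o tperm i j) = - f x.
Proof.
move=> fL fA x i j nij.
pose g y z := f (upd (upd x i y) j z).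
have g_diag y : g y y = 0.
  by apply: (fA _ i j nij); rewrite /upd (negbTE nij) !eqxx.
have gDl y y' z : g (y + y') z = g y z + g y' z.
  by rewrite /g !(updC _ _ _ nij) multilinearD.
have gDr y z z' : g y (z + z') = g y z + g y z' by rewrite /g multilinearD.
have g_id : g (x i) (x j) = f x by rewrite /g !upd_id.
have g_swap : g (x j) (x i) = f (x \o tperm i j).
  congr f; apply: functional_extensionality => k; rewrite /upd /=.
  case: (k =P j) => [->|/eqP nkj]; first by rewrite tpermR.
  case: (k =P i) => [->|/eqP nki]; first by rewrite tpermL.
  by rewrite tpermD // eq_sym.
have := g_diag (x i + x j); rewrite gDl !gDr !g_diag add0r addr0 g_id g_swap.
by move/eqP; rewrite addrC addr_eq0 => /eqP.
Qed.

Lemma alternating_perm f : multilinear f -> alternating f ->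
  forall x (s : 'S_m), f (x \o s) = (-1) ^+ s *: f x.
Proof.
move=> fL fA x s; have [ts -> {s}] := prod_tpermP s.
elim: ts x => [|t ts IHts] x /=.
  move=> _; rewrite big_nil odd_perm1 expr0 scale1r; congr f.
  by apply: functional_extensionality => k; rewrite /= perm1.
case/andP=> t12 dts; rewrite big_cons odd_mul_tperm t12 signr_addb expr1.
have -> : x \o (tperm t.1 t.2 * \prod_(t' <- ts) tperm t'.1 t'.2)%g =
          (x \o \prod_(t' <- ts) tperm t'.1 t'.2)%g \o tperm t.1 t.2.
  by apply: functional_extensionality => k; rewrite /= permM.
by rewrite alternating_tperm // IHts // mulN1r scaleNr.
Qed.

End MultilinearForms.

Section AlternatingRowForms.

Variables (R : comNzRingType) (V : lmodType R) (m : nat).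

Lemma multilinear_eq0_on_basis p (f : ('I_m -> 'rV[R]_p) -> V) :
  multilinear f -> (forall h : 'I_m -> 'I_p, f (fun i => delta_mx 0 (h i)) = 0) ->
  forall x, f x = 0.
Proof.
move=> fL f_basis.
have fk k x : (forall i : 'I_m, (k <= i)%N -> exists j, x i = delta_mx 0 j) -> f x = 0.
  elim: k x => [|k IHk] x x_basis.
    have [h xE] := fin_all_exists (fun i => x_basis i (leq0n i)).
    by rewrite (functional_extensionality _ _ xE) f_basis.
  have [km | mk] := ltnP k m; last first.
    by apply: IHk => i /(leq_trans mk); rewrite leqNgt ltn_ord.
  pose K := Ordinal km.
  rewrite -(upd_id x K) (row_sum_delta (x K)) multilinear_sum // big1 // => j _.
  rewrite IHk ?scaler0 // => i ki; rewrite /upd.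
  case: eqP => [_|/eqP niK]; first by exists j.
  by apply: x_basis; rewrite ltn_neqAle ki andbT eq_sym.
by move=> x; apply: (fk m) => i; rewrite leqNgt ltn_ord.
Qed.

Lemma det_rows_upd (x : 'I_m -> 'rV[R]_m) i (a : R) y z :
  \det (\matrix_k upd x i (a *: y + z) k) =
  a * \det (\matrix_k upd x i y k) + \det (\matrix_k upd x i z k).
Proof.
rewrite -[\det (\matrix_k upd x i z k)]mul1r; apply: (@determinant_multilinear _ _ _ _ _ i).
- by apply/rowP => l; rewrite !mxE /upd eqxx !mxE mul1r.
- by apply/matrixP => k l; rewrite !mxE /upd eq_sym (negbTE (neq_lift i k)).
- by apply/matrixP => k l; rewrite !mxE /upd eq_sym (negbTE (neq_lift i k)).
Qed.

Theorem alternating_form_det (f : ('I_m -> 'rV[R]_m) -> V) :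
  multilinear f -> alternating f ->
  forall x, f x = \det (\matrix_i x i) *: f (fun i => delta_mx 0 i).
Proof.
move=> fL fA x; apply/eqP; rewrite -subr_eq0; apply/eqP; move: x.
apply: multilinear_eq0_on_basis => [x i a y z | h].
  by rewrite fL det_rows_upd scalerDl -scalerA scalerBr opprD addrACA -scalerBr.
have [/injectiveP hI | /injectivePn [i [j nij hij]]] := boolP (injectiveb h).
  have -> : (fun i => delta_mx 0 (h i)) = (fun i => delta_mx 0 i : 'rV[R]_m) \o perm hI.
    by apply: functional_extensionality => i; rewrite /= permE.
  rewrite alternating_perm // (_ : \matrix_i _ = perm_mx (perm hI)) ?det_perm ?subrr //.
  by apply/matrixP => k l; rewrite !mxE permE eqxx eq_sym.
rewrite (fA _ i j nij) ?hij // (determinant_alternate nij) ?scale0r ?subrr //.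
by move=> k; rewrite !mxE hij.
Qed.

End AlternatingRowForms.

Section MatrixUnits.

Variables (R : comNzRingType) (N : nat).

Lemma mulmx_delta_mxE m n p (A : 'M[R]_(m, n)) (i : 'I_n) (j : 'I_p) a b :
  (A *m delta_mx i j) a b = A a i * (b == j)%:R.
Proof.
rewrite mxE (bigD1 i) //= big1 ?addr0 => [|k nki]; first by rewrite mxE eqxx.
by rewrite mxE (negbTE nki) mulr0.
Qed.

Lemma delta_mx_mulmxE m n p (A : 'M[R]_(n, p)) (a : 'I_m) (b : 'I_n) i j :
  (delta_mx a b *m A) i j = (i == a)%:R * A b j.
Proof.
rewrite mxE (bigD1 b) //= big1 ?addr0 => [|k nkb]; first by rewrite mxE eqxx andbT.
by rewrite mxE (negbTE nkb) andbF mul0r.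
Qed.

Lemma delta_mx_sandwich (Y : 'M[R]_N) (a b c e : 'I_N) :
  delta_mx a b *m Y *m delta_mx c e = Y b c *: delta_mx a e.
Proof.
apply/matrixP => i j; rewrite mulmx_delta_mxE delta_mx_mulmxE !mxE.
by case: (i == a); case: (j == e); rewrite /= ?mul1r ?mul0r ?mulr1 ?mulr0.
Qed.

Lemma linear_mx_sandwich (phi : {linear 'M[R]_N -> 'M[R]_N}) Y :
  phi Y = \sum_b \sum_c \sum_a \sum_e
            phi (delta_mx b c) a e *: (delta_mx a b *m Y *m delta_mx c e).
Proof.
rewrite {1}(matrix_sum_delta Y) linear_sum; apply: eq_bigr => b _.
rewrite linear_sum; apply: eq_bigr => c _; rewrite linearZ /=.
rewrite {1}(matrix_sum_delta (phi (delta_mx b c))) scaler_sumr; apply: eq_bigr => a _.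
rewrite scaler_sumr; apply: eq_bigr => e _.
by rewrite delta_mx_sandwich !scalerA mulrC.
Qed.

End MatrixUnits.

Section LinearMapMatrices.

Variable R : comUnitRingType.

Lemma lin_mx_comp m1 n1 m2 n2 m3 n3
  (phi : {linear 'M[R]_(m2, n2) -> 'M[R]_(m3, n3)})
  (psi : {linear 'M[R]_(m1, n1) -> 'M[R]_(m2, n2)}) :
  lin_mx (phi \o psi) = lin_mx psi *m lin_mx phi.
Proof. by apply/row_matrixP => i; rewrite row_mul !rowE !mul_rV_lin /= mxvecK. Qed.

Lemma lin_mx_id m n : lin_mx (@idfun 'M[R]_(m, n)) = 1%:M.
Proof. by apply/row_matrixP => i; rewrite row1 rowE mul_rV_lin /= vec_mxK. Qed.

Lemma lin_mx_mulmx_tr d (h : 'M[R]_d) :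
  lin_mx (@mulmx R d d d h^T) = (lin_mx (@mulmx R d d d h))^T.
Proof.
apply/matrixP => r c; rewrite !mxE /=.
case/mxvec_indexP: r => i j; case/mxvec_indexP: c => a b.
by rewrite !vec_mx_delta !mxvecE !mulmx_delta_mxE mxE eq_sym.
Qed.

Lemma det_lin_mx_mulmxr d (h : 'M[R]_d) :
  \det (lin_mx (@mulmxr R d d d h)) = \det (lin_mx (@mulmx R d d d h)).
Proof.
have trmx_invol : \det (lin_mx (@trmx R d d)) * \det (lin_mx (@trmx R d d)) = 1.
  rewrite -det_mulmx -lin_mx_comp (_ : _ \o _ = idfun) ?lin_mx_id ?det1 //.
  by apply: functional_extensionality => Y; rewrite /= trmxK.
(* Y |-> Y h is conjugate under transposition to Y |-> h^T Y. *)
have -> : @mulmxr R d d d h = @trmx R d d \o mulmx h^T \o @trmx R d d.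
  by apply: functional_extensionality => Y; rewrite /= trmx_mul !trmxK.
by rewrite !lin_mx_comp !det_mulmx lin_mx_mulmx_tr det_tr mulrCA trmx_invol mulr1.
Qed.

Lemma det_lin_mx_conj d (g : 'M[R]_d) : g \in unitmx ->
  \det (lin_mx (fun Y : 'M[R]_d => g *m Y *m invmx g)) = 1.
Proof.
move=> gU; have -> : (fun Y => g *m Y *m invmx g) = mulmxr (invmx g) \o mulmx g.
  by apply: functional_extensionality => Y.
rewrite lin_mx_comp det_mulmx det_lin_mx_mulmxr -det_mulmx -lin_mx_comp.
rewrite (_ : _ \o _ = idfun) ?lin_mx_id ?det1 //.
by apply: functional_extensionality => Y; rewrite /= mulKmx.
Qed.

End LinearMapMatrices.

Section DeterminantOfMatrixTuples.

Variables (F : fieldType) (d : nat).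
Implicit Type x : 'I_(d * d) -> 'M[F]_d.

(* elem_mx (mxvec_index a b) = delta_mx a b, in the order used by detx. *)
Definition elem_mx (c : 'I_(d * d)) : 'M[F]_d := vec_mx (delta_mx 0 c).

Lemma detxE x : detx x = \det (\matrix_c mxvec (x c)).
Proof. by rewrite /detx -det_tr; congr (\det _); apply/matrixP => r c; rewrite !mxE. Qed.

Theorem alternating_form_detx (V : lmodType F) (f : ('I_(d * d) -> 'M[F]_d) -> V) :
  multilinear f -> alternating f -> forall x, f x = detx x *: f elem_mx.
Proof.
move=> fL fA x; pose g y := f (vec_mx \o y).
have gL : multilinear g by move=> y i a u v; rewrite /g !comp_upd linearP fL.
have gA : alternating g by move=> y i j nij yij; apply: (fA _ i j) => //=; rewrite yij.
have -> : f x = g (fun c => mxvec (x c)).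
  by congr f; apply: functional_extensionality => c; rewrite /= mxvecK.
by rewrite (alternating_form_det gL gA) detxE.
Qed.

Lemma detx_linear (phi : {linear 'M[F]_d -> 'M[F]_d}) x :
  detx (phi \o x) = detx x * \det (lin_mx phi).
Proof.
rewrite !detxE -det_mulmx; congr (\det _).
by apply/row_matrixP => c; rewrite row_mul !rowK mul_vec_lin.
Qed.

Lemma detx_conj (g : 'M[F]_d) x : g \in unitmx ->
  detx (fun c => g *m x c *m invmx g) = detx x.
Proof.
by move=> gU; rewrite (detx_linear (mulmxr (invmx g) \o mulmx g)) det_lin_mx_conj ?mulr1.
Qed.

Lemma detx_elem_mx : detx elem_mx = 1.
Proof.
rewrite detxE -[RHS](det1 F (d * d)); congr (\det _).
by apply/row_matrixP => c; rewrite rowK row1 /elem_mx vec_mxK.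
Qed.

End DeterminantOfMatrixTuples.

Lemma prodr_bool (R : comNzRingType) (I : finType) (b : I -> bool) :
  \prod_i (b i)%:R = [forall i, b i]%:R :> R.
Proof.
have [/forallP bT | /forallPn [i /negbTE bFi]] := boolP [forall i, b i].
  by rewrite big1 // => i _; rewrite bT.
by rewrite (bigD1 i) //= bFi mul0r.
Qed.

Lemma codom_full_injectiveb (T : finType) (f : T -> T) :
  [forall y, y \in codom f] = injectiveb f.
Proof.
apply/idP/idP => [/forallP f_onto | /injectiveP fI]; last first.
  by apply/forallP => y; apply: inj_card_onto.
have card_codom_f : #|codom f| = #|T|.
  by apply/eqP; rewrite eqn_leq max_card subset_leq_card //; apply/subsetP => y _.
by apply/card_uniqP; rewrite size_codom.
Qed.

Lemma sum_signed_subsets (R : comNzRingType) (T : finType) (f : T -> T) :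
  \sum_(e : {ffun T -> bool}) (\prod_y (if e y then 1 else -1)) * \prod_x (e (f x))%:R
  = (injectiveb f)%:R :> R.
Proof.
have prod_cover (e : {ffun T -> bool}) :
    \prod_x (e (f x))%:R = \prod_y ((y \in codom f) ==> e y)%:R :> R.
  rewrite !prodr_bool; congr ((nat_of_bool _)%:R).
  apply/forallP/forallP => [e_f y | e_codom x].
    by apply/implyP => /codomP [x ->].
  by apply: (implyP (e_codom (f x))); apply: codom_f.
under eq_bigr => e _ do rewrite prod_cover -big_split /=.
rewrite -(bigA_distr_bigA (fun y b => (if b then 1 else -1) * ((y \in codom f) ==> b)%:R)).
rewrite -codom_full_injectiveb -prodr_bool; apply: eq_bigr => y _.
rewrite big_bool /= implybT mul1r.
by case: (y \in codom f); rewrite /= ?mulr0 ?addr0 ?mulr1 ?subrr.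
Qed.

Lemma sum_injective_ffun (R : zmodType) (T : finType) (G : {ffun T -> T} -> R) :
  \sum_(f : {ffun T -> T} | injectiveb f) G f = \sum_(s : {perm T}) G (pval s).
Proof.
rewrite (reindex (@pval _)) /=; last first.
  pose in_perm := insubd (1%g : {perm T}).
  by exists in_perm => /= f f_inj; first apply: val_inj; apply: insubdK.
by apply: eq_bigl => s; rewrite (valP s).
Qed.

Section KroneckerProduct.

Variables (F : fieldType) (d n : nat).
Local Notation idx i := (enum_val i : tidx d n).
Implicit Types A B : 'I_n -> 'M[F]_d.

Lemma eq_kron A B : A =1 B -> kron A = kron B.
Proof. by move=> AB; congr kron; apply: functional_extensionality. Qed.

Lemma kron_mul A B : kron A *m kron B = kron (fun k => A k *m B k).
Proof.
apply/matrixP => i j; rewrite !mxE.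
under eq_bigr => l _ do rewrite !mxE -big_split /=.
rewrite -(big_enum_val (fun t : tidx d n =>
  \prod_k (A k (idx i k) (t k) * B k (t k) (idx j k)))) (eq_bigl (fun=> true)) //.
rewrite -(bigA_distr_bigA (fun k (a : 'I_d) => A k (idx i k) a * B k a (idx j k))).
by apply: eq_bigr => k _; rewrite mxE.
Qed.

Lemma kron1 : kpow 1%:M = 1%:M :> tens F d n.
Proof.
apply/matrixP => i j; rewrite !mxE; under eq_bigr => k _ do rewrite mxE.
rewrite prodr_bool; congr ((nat_of_bool _)%:R); apply/forallP/eqP => [ij_eq | -> k //].
by apply: enum_val_inj; apply/ffunP => k; apply/eqP/ij_eq.
Qed.

Lemma kron_delta_mx (i j : 'I_(tdim d n)) :
  kron (fun k => delta_mx (idx i k) (idx j k)) = delta_mx i j :> tens F d n.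
Proof.
apply/matrixP => a b; rewrite !mxE; under eq_bigr => k _ do rewrite mxE.
rewrite prodr_bool; congr ((nat_of_bool _)%:R).
apply/forallP/andP => [ab_eq | [/eqP -> /eqP -> k]]; last by rewrite !eqxx.
by split; apply/eqP/enum_val_inj/ffunP => k; have /andP[/eqP ? /eqP ?] := ab_eq k.
Qed.

Lemma kron_sum (J : finType) (c : J -> F) (B : J -> 'M[F]_d) :
  kpow (\sum_j c j *: B j) =
  \sum_(f : {ffun 'I_n -> J}) (\prod_k c (f k)) *: kron (fun k => B (f k)).
Proof.
apply/matrixP => a b; rewrite !mxE summxE.
under eq_bigr => k _ do (rewrite summxE; under eq_bigr => j _ do rewrite mxE).
by rewrite bigA_distr_bigA; apply: eq_bigr => f _; rewrite !mxE -big_split.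
Qed.

Lemma kron_polarization A :
  \sum_(s : 'S_n) kron (fun k => A (s k)) =
  \sum_(e : {ffun 'I_n -> bool})
     (\prod_i (if e i then 1 else -1)) *: kpow (\sum_i (e i)%:R *: A i).
Proof.
under [RHS]eq_bigr => e _ do rewrite kron_sum scaler_sumr.
rewrite exchange_big /=.
under [RHS]eq_bigr => f _ do
  rewrite (eq_bigr _ (fun e _ => scalerA _ _ _)) -scaler_suml sum_signed_subsets.
rewrite [RHS](eq_bigr (fun f : {ffun 'I_n -> 'I_n} =>
  if injectiveb f then kron (fun k => A (f k)) else 0)).
  rewrite -big_mkcond sum_injective_ffun; apply: eq_bigr => s _.
  by apply: eq_kron => k; rewrite pvalE.
by move=> f _; case: injectiveb; rewrite ?scale1r ?scale0r.
Qed.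

Local Notation P := (perm_op F d).

Lemma perm_op_mulmxE (s : 'S_n) (X : tens F d n) i j :
  (P s *m X) i j = X (enum_rank [ffun k => idx i (s k)]) j.
Proof.
rewrite mxE (bigD1 (enum_rank [ffun k => idx i (s k)])) //= big1 ?addr0.
  rewrite !mxE enum_rankK (_ : _ == _ = true) ?mul1r //.
  by apply/eqP/ffunP => k; rewrite !ffunE permKV.
move=> l nl; rewrite !mxE; case: eqP => [il|_]; last by rewrite mul0r.
case/eqP: nl; apply: enum_val_inj; rewrite enum_rankK; apply/ffunP => k.
by rewrite il !ffunE permK.
Qed.

Lemma mulmx_perm_opE (s : 'S_n) (X : tens F d n) i j :
  (X *m P s) i j = X i (enum_rank [ffun k => idx j ((s^-1)%g k)]).
Proof.
rewrite mxE (bigD1 (enum_rank [ffun k => idx j ((s^-1)%g k)])) //= big1 ?addr0.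
  by rewrite !mxE enum_rankK eqxx mulr1.
move=> l nl; rewrite !mxE; case: eqP => [lj|_]; last by rewrite mulr0.
by case/eqP: nl; apply: enum_val_inj; rewrite enum_rankK lj.
Qed.

Lemma perm_op_mul (s t : 'S_n) : P s *m P t = P (t * s)%g.
Proof.
apply/matrixP => i j; rewrite perm_op_mulmxE !mxE enum_rankK.
congr (if _ then _ else _); apply/eqP/eqP => ij_eq; apply/ffunP => k.
  have := congr1 (fun g : tidx d n => g ((s^-1)%g k)) ij_eq; rewrite !ffunE permKV => ->.
  by rewrite invMg permM.
by rewrite !ffunE ij_eq !ffunE invMg permM permK.
Qed.

Lemma perm_op1 : P (1%g : 'S_n) = 1%:M.
Proof.
apply/matrixP => i j; rewrite !mxE.
have -> : [ffun k => idx j (((1 : 'S_n)^-1)%g k)] = idx j.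
  by apply/ffunP => k; rewrite ffunE invg1 perm1.
by rewrite (inj_eq enum_val_inj); case: eqP.
Qed.

Lemma perm_op_conj_kron (s : 'S_n) A :
  P s *m kron A *m P (s^-1)%g = kron (fun k => A ((s^-1)%g k)).
Proof.
apply/matrixP => i j; rewrite mulmx_perm_opE perm_op_mulmxE !mxE !enum_rankK.
by rewrite [RHS](reindex_perm s); apply: eq_bigr => k _; rewrite !ffunE invgK permK.
Qed.

End KroneckerProduct.

Section Char0Density.

Variable F : fieldType.
Hypothesis F0 : [pchar F] =i pred0.

Lemma natr_inj : injective (fun k : nat => k%:R : F).
Proof.
move=> k l /= kl; wlog le_kl : k l kl / (k <= l)%N.
  by move=> W; case/orP: (leq_total k l) => [/W->|/W<-].
by apply/eqP; rewrite eqn_leq le_kl /= -subn_eq0 -((pcharf0P F).1 F0) natrB // kl subrr.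
Qed.

Lemma poly_eq0_of_roots_nat (p : {poly F}) : (forall k : nat, root p k%:R) -> p = 0.
Proof.
move=> p_nat; apply: (@roots_geq_poly_eq0 _ p [seq k%:R | k <- iota 0 (size p)]).
- by apply/allP => _ /mapP [k _ ->].
- by rewrite map_inj_uniq ?iota_uniq //; apply: natr_inj.
- by rewrite size_map size_iota.
Qed.

Lemma unitmx_add_scalar d (A : 'M[F]_d) t :
  ~~ root (char_poly (- A)) t -> A + t%:M \in unitmx.
Proof.
rewrite -eigenvalue_root_char unitmxE unitfE; apply: contraNN => /det0P [v nz_v vA0].
apply/eigenvalueP; exists v => //; apply/eqP.
by rewrite mulmxN eq_sym -subr_eq0 opprK -mul_mx_scalar -mulmxDr addrC vA0.
Qed.

Lemma poly_eq0_of_unit_shifts d (A : 'M[F]_d) (p : {poly F}) :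
  (forall t, A + t%:M \in unitmx -> p.[t] = 0) -> p = 0.
Proof.
move=> p_unit; have /eqP : p * char_poly (- A) = 0.
  apply: poly_eq0_of_roots_nat => k; rewrite rootM.
  have [_ | /unitmx_add_scalar/p_unit pk0] := boolP (root (char_poly (- A)) k%:R).
    by rewrite orbT.
  by rewrite /root pk0 eqxx.
by rewrite mulf_eq0 (negbTE (monic_neq0 (char_poly_monic _))) orbF => /eqP.
Qed.

End Char0Density.

Section TensorPowerCommutant.

Variables (F : fieldType) (d n : nat).
Local Notation idx i := (enum_val i : tidx d n).

Lemma kpow_shift_poly (A : 'M[F]_d) :
  exists P : 'I_(tdim d n) -> 'I_(tdim d n) -> {poly F},
    forall t i j, (P i j).[t] = kpow (A + t%:M) i j.
Proof.
exists (fun i j =>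
  \prod_k ((A (idx i k) (idx j k))%:P + (idx i k == idx j k)%:R *: 'X)).
move=> t i j; rewrite horner_prod mxE; apply: eq_bigr => k _.
by rewrite !hornerE !mxE mulr_natl.
Qed.

Lemma comm_kpow_of_units (J : tens F d n) : [pchar F] =i pred0 ->
  (forall g, g \in unitmx -> comm_mx J (kpow g)) -> forall A, comm_mx J (kpow A).
Proof.
(* The entries of the commutator of J with kpow (A + t%:M) are polynomials in t
   vanishing whenever A + t%:M is invertible. *)
move=> F0 cJ A; have [P PE] := kpow_shift_poly A.
apply/matrixP => i j; apply/eqP; rewrite -subr_eq0.
pose Q := \sum_l ((J i l)%:P * P l j - P i l * (J l j)%:P).
have QE t : Q.[t] = (J *m kpow (A + t%:M)) i j - (kpow (A + t%:M) *m J) i j.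
  rewrite horner_sum !mxE -sumrB; apply: eq_bigr => l _.
  by rewrite hornerD hornerN !hornerM !hornerC !PE.
have Q0 : Q = 0.
  apply: (poly_eq0_of_unit_shifts F0 (A := A)) => t /cJ cJt.
  by rewrite QE cJt subrr.
by have := QE 0; rewrite Q0 horner0 raddf0 addr0 => <-.
Qed.

End TensorPowerCommutant.

Section ReynoldsOperator.

Variables (F : fieldType) (gT : finGroupType) (G : {group gT}) (N : nat).
Variable rG : mx_representation F G N.
Local Notation E_G := (enveloping_algebra_mx rG).

Definition reynolds (X : 'M[F]_N) := \sum_(x in G) rG (x^-1)%g *m X *m rG x.

Definition equivariant_avg (phi : 'M[F]_N -> 'M[F]_N) Y :=
  \sum_(x in G) rG (x^-1)%g *m phi (rG x *m Y).

Lemma equivariant_avgE (phi : {linear 'M[F]_N -> 'M[F]_N}) Y :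
  equivariant_avg phi Y = \sum_b \sum_c \sum_a \sum_e
    phi (delta_mx b c) a e *: (reynolds (delta_mx a b) *m Y *m delta_mx c e).
Proof.
transitivity (\sum_(x in G) \sum_b \sum_c \sum_a \sum_e phi (delta_mx b c) a e *:
                (rG (x^-1)%g *m delta_mx a b *m rG x *m Y *m delta_mx c e)).
  apply: eq_bigr => x _; rewrite (linear_mx_sandwich phi).
  do 4!(rewrite mulmx_sumr; apply: eq_bigr => ? _).
  by rewrite -scalemxAr !mulmxA.
rewrite exchange_big; do 3!(apply: eq_bigr => ? _; rewrite exchange_big).
by apply: eq_bigr => ? _; rewrite -scaler_sumr -!mulmx_suml.
Qed.

Lemma equivariant_avg_mulmxl (phi : {linear 'M[F]_N -> 'M[F]_N}) J Y :
  (forall a b, comm_mx J (reynolds (delta_mx a b))) ->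
  equivariant_avg phi (J *m Y) = J *m equivariant_avg phi Y.
Proof.
move=> cJ; rewrite !equivariant_avgE.
do 4!(rewrite [RHS]mulmx_sumr; apply: eq_bigr => ? _).
by rewrite -scalemxAr !mulmxA cJ.
Qed.

Theorem double_commutant_envelop J : #|G|%:R != 0 :> F ->
  (forall a b, comm_mx J (reynolds (delta_mx a b))) -> (J \in E_G)%MS.
Proof.
(* Averaging a projection pi onto E_G gives a map into E_G sending J to
   J * (#|G| *: 1). *)
move=> nzG cJ.
pose pi : {linear 'M[F]_N -> 'M[F]_N} :=
  vec_mx \o mulmxr (proj_mx <<E_G>>%MS (<<E_G>>^C)%MS) \o mxvec.
have pi_sub Y : (pi Y \in E_G)%MS by rewrite /= vec_mxK -(genmxE E_G) proj_mx_sub.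
have pi_id A : (A \in E_G)%MS -> pi A = A.
  by move=> EA; rewrite /= proj_mx_id ?mxvecK ?capmx_compl ?genmxE.
have pi_avg1 : equivariant_avg pi 1%:M = #|G|%:R *: 1%:M.
  rewrite /equivariant_avg scaler_nat -sumr_const; apply: eq_bigr => x Gx.
  by rewrite mulmx1 pi_id ?envelop_mx_id // -repr_mxM ?groupV // mulVg repr_mx1.
have pi_avg_sub Y : (equivariant_avg pi Y \in E_G)%MS.
  rewrite linear_sum summx_sub // => x Gx.
  by rewrite envelop_mxM ?envelop_mx_id ?groupV.
have := pi_avg_sub J; rewrite -{1}[J]mulmx1 equivariant_avg_mulmxl // pi_avg1.
rewrite -scalemxAr mulmx1 => EG_nJ.
by rewrite -(scalerK nzG J) linearZ scalemx_sub.
Qed.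

End ReynoldsOperator.

Section PermutationRepresentation.

Variables (F : fieldType) (d n : nat).
Local Notation idx i := (enum_val i : tidx d n).
Local Notation P := (perm_op F d).

(* perm_op is an anti-homomorphism (perm_op_mul), hence the inverse. *)
Lemma perm_op_inv_repr : mx_repr [set: 'S_n] (fun s => P (s^-1)%g).
Proof. by split=> [|s t _ _]; rewrite ?invg1 ?perm_op1 // invMg perm_op_mul. Qed.

Definition perm_rep := MxRepresentation perm_op_inv_repr.

Lemma envelop_perm_rep_span (J : tens F d n) :
  (J \in enveloping_algebra_mx perm_rep)%MS -> in_perm_span J.
Proof.
case/envelop_mxP => a ->; exists (fun s => a (s^-1)%g).
rewrite [RHS](reindex_inj invg_inj); apply: eq_big => [s | s _]; rewrite ?in_setT //=.
by rewrite invgK.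
Qed.

Lemma reynolds_perm_rep_delta i j :
  reynolds perm_rep (delta_mx i j) =
  \sum_(s : 'S_n) kron (fun k => delta_mx (idx i (s k)) (idx j (s k))).
Proof.
rewrite /reynolds [RHS](reindex_inj invg_inj) /=.
apply: eq_big => [s | s _]; first by rewrite in_setT.
by rewrite invgK -kron_delta_mx perm_op_conj_kron.
Qed.

Lemma comm_reynolds_perm_rep (J : tens F d n) :
  (forall A, comm_mx J (kpow A)) ->
  forall i j, comm_mx J (reynolds perm_rep (delta_mx i j)).
Proof.
move=> cJ i j; rewrite reynolds_perm_rep_delta.
rewrite (kron_polarization (fun k => delta_mx (idx i k) (idx j k))).
by apply: comm_mx_sum => e _; rewrite /comm_mx -scalemxAl -scalemxAr cJ.
Qed.

End PermutationRepresentation.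

Section TensorPolynomialConjugation.

Variables (F : fieldType) (d m n : nat) (g : 'M[F]_d).
Hypothesis gU : g \in unitmx.

Lemma eval_word_conj (x : 'I_m -> 'M[F]_d) w :
  eval_word (fun c => g *m x c *m invmx g) w = g *m eval_word x w *m invmx g.
Proof.
elim: w => [|c w IHw] /=; first by rewrite mulmx1 mulmxV.
by rewrite IHw !mulmxA mulmxKV.
Qed.

Lemma eval_tpoly_conj (G : tpoly F m n) x :
  eval_tpoly G (fun c => g *m x c *m invmx g) =
  kpow g *m eval_tpoly G x *m kpow (invmx g).
Proof.
rewrite /eval_tpoly mulmx_sumr mulmx_suml; apply: eq_bigr => t _.
rewrite -scalemxAr -scalemxAl !kron_mul; congr (_ *: _); apply: eq_kron => k.
by rewrite eval_word_conj.
Qed.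

Lemma GL_invariant_comm (J : tens F d n) :
  GL_invariant J -> comm_mx J (kpow g).
Proof.
move=> J_inv; rewrite /comm_mx -{1}(J_inv g gU) -!mulmxA kron_mul.
have -> : kpow (invmx g *m g) = 1%:M :> tens F d n.
  by rewrite -kron1; apply: eq_kron => k; rewrite mulVmx.
by rewrite mulmx1.
Qed.

End TensorPolynomialConjugation.

Theorem mainTheorem2 (F : fieldType) (d n : nat)
  (G : tpoly F (d * d) n) :
  [pchar F] =i pred0 ->
  (0 < d)%N -> (0 < n)%N ->
  multilinear_fun (fun x : 'I_(d * d) -> 'M[F]_d => eval_tpoly G x) ->
  alternating_fun (fun x : 'I_(d * d) -> 'M[F]_d => eval_tpoly G x) ->
  exists J : tens F d n,
    [/\ GL_invariant J, in_perm_span J &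
        forall x : 'I_(d * d) -> 'M[F]_d, eval_tpoly G x = detx x *: J].
Proof.
move=> F0 _ _ G_lin G_alt; pose J := eval_tpoly G (@elem_mx F d).
have G_detx x : eval_tpoly G x = detx x *: J := alternating_form_detx G_lin G_alt x.
have J_inv : GL_invariant J.
  by move=> g gU; rewrite -eval_tpoly_conj // G_detx detx_conj // detx_elem_mx scale1r.
exists J; split=> //; apply/envelop_perm_rep_span/double_commutant_envelop => [|a b].
  by rewrite ((pcharf0P F).1 F0) -lt0n; apply/card_gt0P; exists 1%g.
apply/comm_reynolds_perm_rep/(comm_kpow_of_units F0) => g gU.
exact: GL_invariant_comm.
Qed.
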